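(* Let $X$ be a time-homogeneous Markov chain on $\mathbf{R}$ with transition kernel $P$, arbitrary initial distribution, and renewal measure $U(B)=\sum_{n\ge0}\mathbf{P}\{X_n\in B\}$. Suppose there exists $A>0$ such that $\varepsilon:=\inf_{x\in\mathbf{R}}\mathbf{E}\min\{\xi(x),A\}>0$, and that $\delta:=\inf_{x\in\mathbf{R}}\mathbf{P}\{X_n>x\text{ for all }n\ge1\mid X_0=x\}>0$. Then $U(x,x+h]\le (A+h)/(\varepsilon\delta)$ for all $x\in\mathbf{R}$ and $h>0$; in particular $\sup_{k\in\mathbf{Z}}U(k,k+1]<\infty$.
   Context: $\xi(x)$ denotes a random variable distributed as the jump of the chain from $x$: $\mathbf{P}\{x+\xi(x)\in B\}=P(x,B)$. *)

From HB Require Import structures.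
From mathcomp Require Import all_boot all_order all_algebra.
From mathcomp Require Import all_classical all_reals all_analysis.
Set Implicit Arguments. Unset Strict Implicit. Unset Printing Implicit Defensive.
Import Order.TTheory GRing.Theory Num.Theory.
Local Open Scope classical_set_scope.
Local Open Scope ring_scope.
Local Open Scope ereal_scope.

(* A time-homogeneous Markov chain on R is described (in law) by its
   transition kernel P : R.-pker R ~> R and its initial distribution mu. *)

Fixpoint kpow (R : realType) (P : R.-pker R ~> R) (n : nat) (f : R -> \bar R)
  : R -> \bar R :=
  match n with
  | O => f
  | S m => fun x => \int[P x]_y kpow P m f y
  end.

Definition chain_law (R : realType) (P : R.-pker R ~> R)
  (mu : probability R R) (n : nat) (B : set R) : \bar R :=
  \int[mu]_x kpow P n (fun y => (\1_B y)%:E) x.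

Definition renewal (R : realType) (P : R.-pker R ~> R)
  (mu : probability R R) (B : set R) : \bar R :=
  \sum_(0 <= n <oo) chain_law P mu n B.

(* E min{xi(x), A} = \int P(x,dy) min(y - x, A). *)
Definition trunc_drift (R : realType) (P : R.-pker R ~> R) (A x : R) : \bar R :=
  \int[P x]_y (Num.min (y - x) A)%:E.

(* stay_above P c N y = P_y{X_1 > c, ..., X_N > c}. *)
Fixpoint stay_above (R : realType) (P : R.-pker R ~> R) (c : R) (N : nat)
  : R -> \bar R :=
  match N with
  | O => fun _ => 1
  | S M => fun y => \int[P y]_z ((\1_(`]c, +oo[) z)%:E * stay_above P c M z)
  end.

(* P{X_n > x for all n >= 1 | X_0 = x}, as the (monotone) limit of
   P_x{X_1 > x, ..., X_N > x} as N -> oo (continuity from above). *)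
Definition never_below (R : realType) (P : R.-pker R ~> R) (x : R) : \bar R :=
  limn (fun N => stay_above P x N x).

From HB Require Import structures.
From mathcomp Require Import all_boot all_order all_algebra.
From mathcomp Require Import all_classical all_reals all_analysis.
From mathcomp Require Import measurable_realfun.
From mathcomp Require Import lra ring.
Import Order.TTheory GRing.Theory Num.Theory.
Local Open Scope classical_set_scope.
Local Open Scope ring_scope.

(* Fix the window B = (x, c] with c = x + h and let v_N(z) be the expected
   number of visits to B during the first N steps from z.  The truncated
   position f(w) = min(max(w - x, 0), h + A) increases in mean by at least
   eps on B and does not decrease below c, so phi = (h + A - f)/eps + M(1 - delta)
   is a supersolution below c, and v_N <= phi there by induction on N.
   Started above c, the chain reaches B only after falling to c or below, which
   happens with probability at most 1 - delta; this gives v_N <= M(1 - delta)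
   above c.  The constant M = (A + h)/(eps delta) is the one for which both
   bounds are at most M. *)

Local Open Scope ereal_scope.

Lemma indic_EFin_ge0 (R : realType) (B : set R) (z : R) : 0 <= (\1_B z : R)%:E.
Proof. by rewrite lee_fin indicE. Qed.

Lemma measurable_indic_EFin (R : realType) (B : set R) : measurable B ->
  measurable_fun [set: R] (fun z => (\1_B z)%:E : \bar R).
Proof. by move=> mB; apply/measurable_EFinP; exact: measurable_indic. Qed.

Lemma integral_cst_prob d (T : measurableType d) (R : realType)
    (mu : {measure set T -> \bar R}) (r : \bar R) :
  mu [set: T] = 1 -> \int[mu]_t cst r t = r.
Proof. by move=> mu1; rewrite integral_cst // mu1 mule1. Qed.

Lemma integral_cstB_le d (T : measurableType d) (R : realType)
    (mu : {measure set T -> \bar R}) (g : T -> R) (a b : R) :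
  mu [set: T] = 1 -> (0 <= a)%R -> measurable_fun [set: T] g ->
  (forall t, (g t <= a)%R) -> b%:E <= \int[mu]_t (g t)%:E -> \int[mu]_t (a - g t)%:E <= (a - b)%:E.
Proof.
move=> mu1 a0 mg ga gb.
set G := EFin \o g.
have mG : measurable_fun [set: T] G by exact/measurable_EFinP.
have maG : measurable_fun [set: T] (fun t => (a - g t)%:E).
  by apply/measurable_EFinP; apply: measurable_funB.
(* g need not be integrable: from (a - g) + g^+ = a + g^-, an identity between
   nonnegative functions, b <= \int g rules out every infinite case. *)
have split_parts : \int[mu]_t ((a - g t)%:E + G^\+ t) =
                   \int[mu]_t (cst a%:E t + G^\- t).
  apply: eq_integral => t _; rewrite /G funerpos funerneg /= -!EFinD.
  congr (_%:E); rewrite /funrpos /funrneg /=.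
  have [g0|g0] := leP 0%R (g t).
  - by rewrite (max_r (_ : - g t <= 0)%R) ?oppr_le0 //; lra.
  - by rewrite (max_l (_ : 0 <= - g t)%R) ?oppr_ge0 ?ltW //; lra.
rewrite ge0_integralD // in split_parts; last first.
- exact: measurable_funepos.
- by move=> t _; rewrite lee_fin subr_ge0.
rewrite ge0_integralD // in split_parts; last exact: measurable_funeneg.
rewrite integral_cst_prob // in split_parts.
rewrite integralE in gb.
have X0 : 0 <= \int[mu]_t (a - g t)%:E.
  by apply: integral_ge0 => t _; rewrite lee_fin subr_ge0.
have p0 : 0 <= \int[mu]_t G^\+ t by exact: integral_ge0.
have n0 : 0 <= \int[mu]_t G^\- t by exact: integral_ge0.
move: split_parts gb X0 p0 n0.
case: (\int[mu]_t (a - g t)%:E) => [X| |]; case: (\int[mu]_t G^\+ t) => [p| |];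
  case: (\int[mu]_t G^\- t) => [n| |] //=.
by move=> [] e; rewrite !lee_fin => *; lra.
Qed.

Definition visits {R : realType} (P : R.-pker R ~> R) (B : set R) (N : nat)
    (z : R) : \bar R :=
  \sum_(0 <= n < N) kpow P n (fun y => (\1_B y)%:E) z.

Section kernel_iterates.
Context {R : realType} (P : R.-pker R ~> R).

Lemma integral_pker_cst (y : R) (r : \bar R) : \int[P y]_w cst r w = r.
Proof. exact/integral_cst_prob/prob_kernel. Qed.

Lemma kpow_ge0 (n : nat) (f : R -> \bar R) :
  (forall y, 0 <= f y) -> forall y, 0 <= kpow P n f y.
Proof. by move=> f0; elim: n => [|n IH] y //=; exact: integral_ge0. Qed.

Lemma measurable_kpow (n : nat) (f : R -> \bar R) :
  (forall y, 0 <= f y) -> measurable_fun [set: R] f ->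
  measurable_fun [set: R] (kpow P n f).
Proof.
move=> f0 mf; elim: n => [|n IH] //=.
apply: (measurable_fun_integral_kernel (l := P)) => //; first exact: measurable_kernel.
exact: kpow_ge0.
Qed.

Lemma stay_aboveS (c : R) (N : nat) (y : R) : stay_above P c N.+1 y =
  \int[P y]_z ((\1_(`]c, +oo[) z)%:E * stay_above P c N z).
Proof. by []. Qed.

Lemma stay_above_ge0 (c : R) (N : nat) (y : R) : 0 <= stay_above P c N y.
Proof.
elim: N y => [|N IH] y //=; apply: integral_ge0 => z _.
by apply: mule_ge0; [exact: indic_EFin_ge0|exact: IH].
Qed.

Lemma indic_stay_above_ge0 (c : R) (N : nat) (z : R) :
  0 <= (\1_(`]c, +oo[) z)%:E * stay_above P c N z.
Proof. by apply: mule_ge0; [exact: indic_EFin_ge0|exact: stay_above_ge0]. Qed.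

Lemma measurable_stay_above (c : R) (N : nat) :
  measurable_fun [set: R] (stay_above P c N).
Proof.
elim: N => [|N IH] //=.
apply: (measurable_fun_integral_kernel (l := P)); first exact: measurable_kernel.
- exact: indic_stay_above_ge0.
- by apply: emeasurable_funM => //; exact: measurable_indic_EFin.
Qed.

Lemma measurable_indic_stay_above (c : R) (N : nat) :
  measurable_fun [set: R] (fun z => (\1_(`]c, +oo[) z)%:E * stay_above P c N z).
Proof.
apply: emeasurable_funM; first exact: measurable_indic_EFin.
exact: measurable_stay_above.
Qed.

Lemma stay_above_le1 (c : R) (N : nat) (y : R) : stay_above P c N y <= 1.
Proof.
elim: N y => [|N IH] y //=.
rewrite -[leRHS](integral_pker_cst y); apply: ge0_le_integral => //.
- by move=> z _; exact: indic_stay_above_ge0.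
- exact: measurable_indic_stay_above.
- move=> z _ /=; rewrite -(mule1 1); apply: lee_pmul; last exact: IH.
  + exact: indic_EFin_ge0.
  + exact: stay_above_ge0.
  + by rewrite lee_fin indicE; case: (_ \in _).
Qed.

Lemma stay_above_le_level (c c' : R) (N : nat) (y : R) : (c <= c')%R ->
  stay_above P c' N y <= stay_above P c N y.
Proof.
move=> cc'; elim: N y => [|N IH] y //=.
apply: ge0_le_integral => //.
- by move=> z _; exact: indic_stay_above_ge0.
- exact: measurable_indic_stay_above.
- exact: measurable_indic_stay_above.
- move=> z _; apply: lee_pmul; [exact: indic_EFin_ge0|exact: stay_above_ge0| |exact: IH].
  rewrite lee_fin !indicE !mem_setE !in_itv /= !andbT.
  by have [/(le_lt_trans cc') ->|] := ltP c' z.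
Qed.

Lemma stay_aboveS_le (c : R) (N : nat) (y : R) :
  stay_above P c N.+1 y <= stay_above P c N y.
Proof.
elim: N y => [|N IH] y; first exact: stay_above_le1.
rewrite stay_aboveS [leRHS]stay_aboveS; apply: ge0_le_integral => //.
- by move=> z _; exact: indic_stay_above_ge0.
- exact: measurable_indic_stay_above.
- exact: measurable_indic_stay_above.
- by move=> z _; apply: lee_wpmul2l; [exact: indic_EFin_ge0|exact: IH].
Qed.

Lemma never_below_le_stay_above (y : R) (N : nat) :
  never_below P y <= stay_above P y N y.
Proof.
have stay_nonincr : nonincreasing_seq (fun N => stay_above P y N y).
  by apply/nonincreasing_seqP => n; exact: stay_aboveS_le.
rewrite /never_below (cvg_lim _ (ereal_nonincreasing_cvgn stay_nonincr)) //.
by apply: ereal_inf_lbound; exists N.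
Qed.

Section visits.
Variables (B : set R) (mB : measurable B).

Lemma visits_ge0 (N : nat) (z : R) : 0 <= visits P B N z.
Proof. by apply: sume_ge0 => n _; apply: kpow_ge0; exact: indic_EFin_ge0. Qed.

Lemma measurable_visits (N : nat) : measurable_fun [set: R] (visits P B N).
Proof.
apply: emeasurable_sum => n; apply: measurable_kpow; first exact: indic_EFin_ge0.
exact: measurable_indic_EFin.
Qed.

Lemma integral_visits (mu : {measure set R -> \bar R}) (N : nat) :
  \int[mu]_z visits P B N z =
  \sum_(0 <= n < N) \int[mu]_z kpow P n (fun y => (\1_B y)%:E) z.
Proof.
rewrite ge0_integral_sum // => n.
- by apply: measurable_kpow; [exact: indic_EFin_ge0|exact: measurable_indic_EFin].
- by move=> z _; apply: kpow_ge0; exact: indic_EFin_ge0.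
Qed.

Lemma visitsS (N : nat) (z : R) :
  visits P B N.+1 z = (\1_B z)%:E + \int[P z]_w visits P B N w.
Proof. by rewrite /visits big_nat_recl // integral_visits. Qed.

Lemma renewal_le (mu : probability R R) (M : R) :
  (forall N z, visits P B N z <= M%:E) -> renewal P mu B <= M%:E.
Proof.
move=> visits_le; apply: lime_le.
  apply: is_cvg_nneseries => n _ _; apply: integral_ge0 => y _.
  by apply: kpow_ge0; exact: indic_EFin_ge0.
apply: nearW => N; rewrite -integral_visits.
rewrite -[leRHS](@integral_cst_prob _ _ _ mu); last exact: probability_setT.
apply: ge0_le_integral => //; first by move=> z _; exact: visits_ge0.
exact: measurable_visits.
Qed.

End visits.
End kernel_iterates.

Section lyapunov.
Variables (R : realType) (P : R.-pker R ~> R) (x h A eps delta : R).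
Hypotheses (h_gt0 : (0 < h)%R) (A_gt0 : (0 < A)%R).
Hypotheses (eps_gt0 : (0 < eps)%R) (delta_gt0 : (0 < delta)%R).
Hypothesis trunc_drift_ge : forall z, eps%:E <= trunc_drift P A z.
Hypothesis never_below_ge : forall z, delta%:E <= never_below P z.

Let c : R := (x + h)%R.
Let B : set R := `]x, c].
Let f (w : R) : R := (Num.min (Num.max (w - x) 0) (h + A))%R.
Let M : R := ((A + h) / (eps * delta))%R.
Let phi (z : R) : R := (eps^-1 * (h + A - f z) + M * (1 - delta))%R.

Lemma delta_le1 : (delta <= 1)%R.
Proof.
by rewrite -lee_fin (le_trans (never_below_ge 0) (never_below_le_stay_above P 0 0)).
Qed.

Lemma stay_above_ge_delta (N : nat) (z : R) : (c <= z)%R ->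
  delta%:E <= stay_above P c N z.
Proof.
move=> cz; apply: le_trans (never_below_ge z) _.
apply: le_trans (never_below_le_stay_above P z N) _; exact: stay_above_le_level.
Qed.

Lemma f_ge0 (w : R) : (0 <= f w)%R.
Proof. by rewrite /f le_min le_max lexx orbT addr_ge0 ?ltW. Qed.

Lemma f_le (w : R) : (f w <= h + A)%R.
Proof. by rewrite /f ge_min lexx orbT. Qed.

Lemma f_eq0 (z : R) : (z <= x)%R -> f z = 0%R.
Proof.
move=> zx; rewrite /f (max_r (_ : z - x <= 0)%R) ?subr_le0 //.
by rewrite (min_l (_ : 0 <= h + A)%R) // addr_ge0 ?ltW.
Qed.

Lemma f_window (z : R) : z \in `]x, c] -> f z = (z - x)%R.
Proof.
rewrite in_itv /c /= => /andP[xz zc].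
rewrite /f (max_l (_ : 0 <= z - x)%R) ?subr_ge0 ?ltW //.
by rewrite (min_l (_ : z - x <= h + A)%R) //; have := A_gt0; lra.
Qed.

Lemma f_drift (z w : R) : z \in `]x, c] ->
  ((z - x) + Num.min (w - z) A <= f w)%R.
Proof.
rewrite in_itv /c /= => /andP[xz zc].
have m1 : (Num.min (w - z) A <= w - z)%R by rewrite ge_min lexx.
have m2 : (Num.min (w - z) A <= A)%R by rewrite ge_min lexx orbT.
by rewrite /f le_min le_max; apply/andP; split; [apply/orP; left|]; lra.
Qed.

Lemma measurable_f : measurable_fun [set: R] f.
Proof.
apply: measurable_minr => //; apply: measurable_maxr => //.
exact: measurable_funB.
Qed.

Lemma lyapunov_drift (z : R) : (z <= c)%R ->
  \int[P z]_w (h + A - f w)%:E <= (h + A - f z - eps * \1_B z)%:E.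
Proof.
move=> zc.
have g_ge0 w : 0 <= (h + A - f w)%:E by rewrite lee_fin subr_ge0 f_le.
have mg : measurable_fun [set: R] (fun w => (h + A - f w)%:E).
  by apply/measurable_EFinP; apply: measurable_funB => //; exact: measurable_f.
have [zx|xz] := leP z x.
  rewrite indicE mem_setE in_itv /= ltNge zx /= mulr0 subr0 f_eq0 // subr0.
  rewrite -[leRHS](integral_pker_cst P z); apply: ge0_le_integral => //.
  by move=> w _; rewrite lee_fin lerBlDr lerDl f_ge0.
have zB : z \in `]x, c] by rewrite in_itv /= xz.
rewrite indicE mem_setE zB mulr1 f_window //.
have mtrunc : measurable_fun [set: R] (fun w => (A - Num.min (w - z) A)%R%:E).
  apply/measurable_EFinP; apply: measurable_funB => //.
  by apply: measurable_minr => //; exact: measurable_funB.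
apply: (@le_trans _ _ (\int[P z]_w ((h - (z - x))%:E + (A - Num.min (w - z) A)%:E))).
  apply: ge0_le_integral => //.
  - by apply: emeasurable_funD.
  - by move=> w _; rewrite -EFinD lee_fin; have := f_drift z w zB; lra.
rewrite ge0_integralD //; first last.
- by move=> w _; rewrite lee_fin subr_ge0 ge_min lexx orbT.
- by move=> w _; rewrite lee_fin subr_ge0; move: zc; rewrite /c; lra.
rewrite integral_pker_cst.
apply: (@le_trans _ _ ((h - (z - x))%:E + (A - eps)%:E)); last first.
  by rewrite -EFinD lee_fin; lra.
rewrite leeD2l //; apply: integral_cstB_le.
- exact: prob_kernel.
- exact: ltW.
- by apply: measurable_minr => //; exact: measurable_funB.
- by move=> w; rewrite ge_min lexx orbT.
- exact: trunc_drift_ge.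
Qed.

Lemma M_ge0 : (0 <= M)%R.
Proof. by rewrite /M divr_ge0 ?mulr_ge0 ?addr_ge0 ?ltW. Qed.

Lemma phi_le_M (w : R) : (phi w <= M)%R.
Proof.
have phi_max : (eps^-1 * (h + A) + M * (1 - delta) = M)%R.
  by rewrite /M; field; rewrite !lt0r_neq0.
rewrite -[leRHS]phi_max lerD2r; apply: ler_wpM2l; first by rewrite invr_ge0 ltW.
by rewrite lerBlDr lerDl f_ge0.
Qed.

Lemma phi_ge (w : R) : (M * (1 - delta) <= phi w)%R.
Proof.
rewrite /phi lerDr; apply: mulr_ge0; first by rewrite invr_ge0 ltW.
by rewrite subr_ge0 f_le.
Qed.

Lemma visits_le_phi_above (N : nat) (w : R) : (c < w)%R ->
  visits P B N w + M%:E * stay_above P c N w <= M%:E ->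
  visits P B N w <= (phi w)%:E.
Proof.
move=> cw visits_above; apply: le_trans (_ : (M * (1 - delta))%:E <= _); last first.
  by rewrite lee_fin phi_ge.
have := stay_above_ge_delta N w (ltW cw); have := stay_above_le1 P c N w.
move: visits_above (visits_ge0 P B N w) (M_ge0).
case: (visits P B N w) => [v| |] //; case: (stay_above P c N w) => [s| |] //.
rewrite -EFinM -EFinD !lee_fin => v_le v0 M0 s1 s_delta.
have : (M * delta <= M * s)%R by exact: ler_wpM2l.
by lra.
Qed.

Lemma visits_step_below (N : nat) (z : R) :
  (forall w, visits P B N w <= (phi w)%:E) -> (z <= c)%R ->
  visits P B N.+1 z <= (phi z)%:E.
Proof.
move=> visits_le_phi zc.
have mB : measurable B by exact: measurable_itv.
rewrite visitsS //.
have g_ge0 w : 0 <= (h + A - f w)%:E by rewrite lee_fin subr_ge0 f_le.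
have mg : measurable_fun [set: R] (fun w => (h + A - f w)%:E).
  by apply/measurable_EFinP; apply: measurable_funB => //; exact: measurable_f.
have c0_ge0 : (0 <= M * (1 - delta))%R.
  by apply: mulr_ge0; [exact: M_ge0|rewrite subr_ge0 delta_le1].
have int_phi : \int[P z]_w (phi w)%:E =
    (eps^-1)%:E * \int[P z]_w (h + A - f w)%:E + (M * (1 - delta))%:E.
  under eq_integral do rewrite EFinD EFinM.
  rewrite ge0_integralD //; first last.
  - by apply: emeasurable_funM.
  - by move=> w _; rewrite -EFinM lee_fin; apply: mulr_ge0; rewrite ?invr_ge0 ?subr_ge0 ?f_le ?ltW.
  by rewrite ge0_integralZl_EFin ?invr_ge0 ?ltW // integral_pker_cst.
apply: (@le_trans _ _ ((\1_B z)%:E + \int[P z]_w (phi w)%:E)).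
  rewrite leeD2l //; apply: ge0_le_integral => //.
  - by move=> w _; exact: visits_ge0.
  - exact: measurable_visits.
  - apply/measurable_EFinP; apply: measurable_funD => //.
    by apply: measurable_funM => //; apply: measurable_funB => //; exact: measurable_f.
rewrite int_phi.
have := lyapunov_drift z zc; have : 0 <= \int[P z]_w (h + A - f w)%:E.
  by apply: integral_ge0 => w _; exact: g_ge0.
case: (\int[P z]_w (h + A - f w)%:E) => [I| |] //; rewrite !lee_fin => _ I_le.
have eps_inv : (eps^-1 * eps = 1)%R by rewrite mulVf ?lt0r_neq0.
have inv_ge0 : (0 <= eps^-1)%R by rewrite invr_ge0 ltW.
have := ler_wpM2l inv_ge0 I_le.
rewrite /phi !mulrBr mulrA eps_inv mul1r; lra.
Qed.

Lemma visits_step_above (N : nat) (z : R) :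
  (forall w, visits P B N w <= (phi w)%:E) ->
  (forall w, (c < w)%R -> visits P B N w + M%:E * stay_above P c N w <= M%:E) ->
  (c < z)%R -> visits P B N.+1 z + M%:E * stay_above P c N.+1 z <= M%:E.
Proof.
move=> visits_le_phi visits_above cz.
have mB : measurable B by exact: measurable_itv.
have stay_ge0 := indic_stay_above_ge0 P c N.
have mstay := measurable_indic_stay_above P c N.
rewrite visitsS // stay_aboveS indicE mem_setE in_itv /= (leNgt z c) cz andbF add0e.
rewrite -ge0_integralZl_EFin ?M_ge0 // -ge0_integralD //; first last.
- by apply: emeasurable_funM.
- by move=> w _; apply: mule_ge0; [rewrite lee_fin M_ge0|exact: stay_ge0].
- exact: measurable_visits.
- by move=> w _; exact: visits_ge0.
rewrite -[leRHS](integral_pker_cst P z); apply: ge0_le_integral => //.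
- move=> w _; apply: adde_ge0; first exact: visits_ge0.
  by apply: mule_ge0; [rewrite lee_fin M_ge0|exact: stay_ge0].
- by apply: emeasurable_funD; [exact: measurable_visits|exact: emeasurable_funM].
move=> w _ /=; rewrite indicE mem_setE in_itv /= andbT.
have [wc|cw] := leP w c.
  by rewrite mul0e mule0 adde0 (le_trans (visits_le_phi w)) // lee_fin phi_le_M.
by rewrite mul1e visits_above.
Qed.

Lemma visits_invariant (N : nat) :
  (forall z, visits P B N z <= (phi z)%:E) /\
  (forall z, (c < z)%R -> visits P B N z + M%:E * stay_above P c N z <= M%:E).
Proof.
elim: N => [|N [visits_le_phi visits_above]].
  have visits0 z : visits P B 0 z = 0 by rewrite /visits big_geq.
  split=> z; rewrite visits0; last by rewrite add0e mule1.
  rewrite lee_fin (le_trans _ (phi_ge z)) //.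
  by apply: mulr_ge0; [exact: M_ge0|rewrite subr_ge0 delta_le1].
have visits_aboveS z := visits_step_above N z visits_le_phi visits_above.
split=> // z; have [zc|cz] := leP z c; first exact: visits_step_below.
exact: visits_le_phi_above (visits_aboveS z cz).
Qed.

Lemma visits_le_M (N : nat) (z : R) : visits P B N z <= M%:E.
Proof.
by apply: le_trans ((visits_invariant N).1 z) _; rewrite lee_fin phi_le_M.
Qed.

End lyapunov.

Local Close Scope ereal_scope.

Theorem theorem2 (R : realType) (P : R.-pker R ~> R) (mu : probability R R)
  (A eps delta : R) (hA : 0 < A)
  (heps : ereal_inf [set trunc_drift P A x | x in [set: R]] = eps%:E)
  (heps0 : 0 < eps)
  (hdelta : ereal_inf [set never_below P x | x in [set: R]] = delta%:E)
  (hdelta0 : 0 < delta) :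
  (forall (x h : R), 0 < h ->
     (renewal P mu `]x, (x + h)%R] <= ((A + h) / (eps * delta))%:E)%E)
  /\ (exists M : R, forall k : int,
     (renewal P mu `]k%:~R, (k%:~R + 1)%R] <= M%:E)%E).
Proof.
have drift_ge z : (eps%:E <= trunc_drift P A z)%E.
  by rewrite -heps; apply: ereal_inf_lbound; exists z.
have never_below_ge z : (delta%:E <= never_below P z)%E.
  by rewrite -hdelta; apply: ereal_inf_lbound; exists z.
have window_bound x h : 0 < h ->
    (renewal P mu `]x, (x + h)%R] <= ((A + h) / (eps * delta))%:E)%E.
  move=> h_gt0; apply: renewal_le; first exact: measurable_itv.
  exact: visits_le_M.
split; first exact: window_bound.
by exists ((A + 1) / (eps * delta)) => k; exact: window_bound.
Qed.
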